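(* Let $b>0$ and let $f\in C^2(\mathbb{R}^+)$ with $f(x)\ge0$, and set $\lambda_{n,b}=2\int_0^\infty\phi_n(bx)f(x)\,\mathrm{d}x$ for $n\in\mathbb{N}^\star$ (i.e. $\lambda_{n,b}=2\int_0^\infty\phi_n(bx)\frac{\mathrm{d}\mu(x)}{x}$ with $\mathrm{d}\mu(x)=xf(x)\,\mathrm{d}x$), where $\phi_n(x)=\int_0^\pi e^{-2x\sin\eta}e^{2in\eta}\,\mathrm{d}\eta$. Assume there is a constant $C>0$ such that (1) $\limsup_{x\to0^+}x|f(x)|+\limsup_{x\to0^+}x^2|f'(x)|\le C$; (2) $\lim_{x\to+\infty}f(x)=0$ and $\lim_{x\to+\infty}xf'(x)=0$; (3) $f''(x)\ge0$ for all $x>0$. Then $\lambda_{n+1,b}+\lambda_{n-1,b}-2\lambda_{n,b}\ge0$ for all $n\ge2$. *)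

From Stdlib Require Import Reals.
From Coquelicot Require Import Coquelicot.
Open Scope R_scope.

Definition cexpi (t : R) : C := (cos t, sin t).

Definition phi (n : nat) (x : R) : C :=
  RInt (V := C_R_CompleteNormedModule)
    (fun eta => Cmult (RtoC (exp (-2 * x * sin eta))) (cexpi (2 * INR n * eta))) 0 PI.

(* lambda_{n,b} = 2 \int_0^\infty phi_n(b x) f(x) dx, as an improper integral
   over ]0,+oo[ (limits at 0+ and at +oo); [lam_is f b n l] says the integral
   converges with value l. *)
Definition lam_is (f : R -> R) (b : R) (n : nat) (l : C) : Prop :=
  is_RInt_gen (V := C_R_NormedModule)
    (fun x => Cmult (RtoC (2 * f x)) (phi n (b * x)))
    (at_right 0) (Rbar_locally p_infty) l.

Definition limsup_right0 (g : R -> R) : Rbar :=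
  Glb_Rbar (fun M : R => exists delta : R, 0 < delta /\
     Finite M = Lub_Rbar (fun y => exists x, 0 < x < delta /\ y = g x)).

From Stdlib Require Import Reals Lra Lia.
From Coquelicot Require Import Coquelicot.
Open Scope R_scope.

(* Since phi_n(y) is real and equal to psi_n(2y) := \int_0^pi e^{-2y sin t} cos(2nt) dt,
   and cos(2(n+1)t) + cos(2(n-1)t) - 2 cos(2nt) = -4 sin^2 t cos(2nt), the second
   difference of lambda is 2 \int_0^oo f(x) k_2(x) dx with k_2 the corresponding
   kernel.  Integrating by parts twice against the primitives k_1, k_0 of k_2 that
   vanish at 0 to order two and three leaves boundary terms, killed by (1) at 0 and
   by (2) at infinity, plus \int f'' k_0 >= 0 by (3).  The positivity of k_0 amounts to
   \int_0^pi e^{-u sin t} cos(2nt) dt <= u (1/(2n-1) - 1/(2n+1)); it follows by moving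
   the contour of \int z^{2n} exp(iu(z - 1/z)/2) dz/(iz) from the unit half circle to
   half circles of radius r -> 0 and comparing sin with the identity. *)

Lemma continuity_pt_ex_derive (g : R -> R) x : ex_derive g x -> continuity_pt g x.
Proof.
  intros Hg. apply continuity_pt_filterlim.
  exact (ex_derive_continuous (V := R_NormedModule) g x Hg).
Qed.

Lemma ex_RInt_continuity_pt (g : R -> R) a b :
  (forall t, continuity_pt g t) -> ex_RInt g a b.
Proof.
  intros Hg. apply (ex_RInt_continuous (V := R_CompleteNormedModule)).
  intros t _. apply continuity_pt_filterlim, Hg.
Qed.

Lemma ex_RInt_ex_derive (g : R -> R) a b : (forall t, ex_derive g t) -> ex_RInt g a b.
Proof.
  intros Hg. apply ex_RInt_continuity_pt. intros t. apply continuity_pt_ex_derive, Hg.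
Qed.

Lemma is_RInt_primitive (F g : R -> R) a b v :
  (forall t, is_derive F t (g t)) -> (forall t, continuity_pt g t) ->
  F b - F a = v -> is_RInt g a b v.
Proof.
  intros HF Hg <-. apply (is_RInt_derive (V := R_CompleteNormedModule)).
  - intros t _. apply HF.
  - intros t _. apply continuity_pt_filterlim, Hg.
Qed.

Lemma is_RInt_abs_le (g : R -> R) a b v M : a <= b ->
  is_RInt g a b v -> (forall t, a <= t <= b -> Rabs (g t) <= M) ->
  Rabs v <= (b - a) * M.
Proof.
  intros Hab Hg HM. rewrite <- (is_RInt_unique _ _ _ _ Hg).
  apply abs_RInt_le_const; [exact Hab | eexists; exact Hg | exact HM].
Qed.

Lemma continuity_2d_pt_comp (h : R -> R) (g : R -> R -> R) x y :
  continuity_pt h (g x y) -> continuity_2d_pt g x y ->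
  continuity_2d_pt (fun u v => h (g u v)) x y.
Proof.
  intros Hh Hg. apply continuity_2d_pt_filterlim.
  apply continuity_2d_pt_filterlim in Hg. apply continuity_pt_filterlim in Hh.
  eapply filterlim_comp; [exact Hg | exact Hh].
Qed.

Ltac solve_continuity_2d :=
  first
  [ apply continuity_2d_pt_id1
  | apply continuity_2d_pt_id2
  | apply continuity_2d_pt_const
  | apply continuity_2d_pt_mult; solve_continuity_2d
  | apply continuity_2d_pt_plus; solve_continuity_2d
  | apply continuity_2d_pt_minus; solve_continuity_2d
  | apply continuity_2d_pt_opp; solve_continuity_2d
  | apply continuity_2d_pt_inv; [solve_continuity_2d | ]
  | apply (continuity_2d_pt_comp exp);
      [apply derivable_continuous_pt, derivable_pt_exp | solve_continuity_2d]
  | apply (continuity_2d_pt_comp sin); [apply continuity_sin | solve_continuity_2d]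
  | apply (continuity_2d_pt_comp cos); [apply continuity_cos | solve_continuity_2d]
  | apply (continuity_2d_pt_comp (fun z => z ^ _));
      [apply derivable_continuous_pt, derivable_pt_pow | solve_continuity_2d] ].

Lemma is_derive_RInt_param_cont (G dG : R -> R -> R) x a b :
  a <= b ->
  locally x (fun y => forall t, is_derive (fun z => G z t) y (dG y t)) ->
  (forall t, a <= t <= b -> continuity_2d_pt dG x t) ->
  (forall y t, continuity_pt (G y) t) ->
  is_derive (fun y => RInt (G y) a b) x (RInt (dG x) a b).
Proof.
  intros Hab HdG HcG HG.
  replace (RInt (dG x) a b) with (RInt (fun t => Derive (fun z => G z t) x) a b).
  2:{ apply RInt_ext. intros t _. apply is_derive_unique, (locally_singleton _ _ HdG). }
  apply (is_derive_RInt_param G a b x).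
  - apply (filter_imp _ _ (fun y Hy t _ => ex_intro _ _ (Hy t)) HdG).
  - intros t Ht. rewrite Rmin_left, Rmax_right in Ht by lra.
    apply continuity_2d_pt_ext_loc with (f := dG); [|now apply HcG].
    destruct HdG as [eps Heps]. exists eps. intros u v Hu _.
    symmetry. apply is_derive_unique, Heps, Hu.
  - apply filter_forall. intros y. apply ex_RInt_continuity_pt, HG.
Qed.

Lemma derive_nonpos_le (D dD : R -> R) a b :
  (forall x, a < x <= b -> is_derive D x (dD x)) -> (forall x, a < x <= b -> dD x <= 0) ->
  forall r, a < r <= b -> D b <= D r.
Proof.
  intros HD Hneg r Hr.
  destruct (Req_dec r b) as [->|Hrb]; [lra|].
  destruct (MVT_gen D r b dD) as [c [Hc Heq]]; rewrite ?Rmin_left, ?Rmax_right in * by lra.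
  - intros x Hx. apply HD. lra.
  - intros x Hx. apply continuity_pt_ex_derive. eexists. apply HD. lra.
  - pose proof (Hneg c ltac:(lra)). nra.
Qed.

Lemma le_0_of_le_linear d C : (forall r, 0 < r <= 1 -> d <= C * r) -> d <= 0.
Proof.
  intros Hd. destruct (Rle_lt_dec d 0) as [|Hpos]; [assumption|].
  set (C' := Rabs C + 1). assert (HC' : 0 < C') by (pose proof (Rabs_pos C); unfold C'; lra).
  set (r := Rmin 1 (d / (2 * C'))).
  assert (Hr0 : 0 < r) by (apply Rmin_glb_lt; [lra | apply Rdiv_lt_0_compat; lra]).
  assert (Hr : r <= d / (2 * C')) by apply Rmin_r.
  specialize (Hd r (conj Hr0 (Rmin_l _ _))).
  assert (C * r <= C' * r) by (pose proof (Rle_abs C); unfold C'; nra).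
  assert (C' * r <= d / 2) by (replace (d / 2) with (C' * (d / (2 * C'))) by (field; lra); nra).
  lra.
Qed.

Lemma is_RInt_plus_R (g h : R -> R) a b Ig Ih : is_RInt g a b Ig -> is_RInt h a b Ih ->
  is_RInt (fun t => g t + h t) a b (Ig + Ih).
Proof. exact (is_RInt_plus g h a b Ig Ih). Qed.

Lemma is_RInt_minus_R (g h : R -> R) a b Ig Ih : is_RInt g a b Ig -> is_RInt h a b Ih ->
  is_RInt (fun t => g t - h t) a b (Ig - Ih).
Proof. exact (is_RInt_minus g h a b Ig Ih). Qed.

Lemma is_RInt_scal_R (g : R -> R) a b k Ig : is_RInt g a b Ig ->
  is_RInt (fun t => k * g t) a b (k * Ig).
Proof. exact (is_RInt_scal g a b k Ig). Qed.

Lemma exp_neg_le_1 v : 0 <= v -> exp (- v) <= 1.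
Proof.
  intros Hv. rewrite <- exp_0. destruct (Req_dec v 0) as [->|Hv0].
  - rewrite Ropp_0. lra.
  - left. apply exp_increasing. lra.
Qed.

Lemma exp_neg_remainder0 v : 0 <= v -> Rabs (exp (- v) - 1) <= v.
Proof.
  intros Hv. pose proof (exp_ineq1_le (- v)). pose proof (exp_neg_le_1 v Hv).
  apply Rabs_le. lra.
Qed.

Lemma exp_neg_remainder1 v : 0 <= v -> Rabs (exp (- v) - 1 + v) <= v ^ 2.
Proof.
  intros Hv.
  destruct (MVT_gen (fun z => exp (- z) - 1 + z) 0 v (fun z => 1 - exp (- z)))
    as [c [Hc Heq]]; rewrite ?Rmin_left, ?Rmax_right in * by lra.
  - intros x _. auto_derive; auto. ring.
  - intros x _. apply continuity_pt_ex_derive. auto_derive. auto.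
  - rewrite Ropp_0, exp_0, Rminus_0_r in Heq.
    pose proof (exp_neg_remainder0 c ltac:(lra)) as Hrem. apply Rabs_le_between in Hrem.
    apply Rabs_le. simpl. nra.
Qed.

Lemma exp_neg_remainder2 v : 0 <= v -> Rabs (exp (- v) - 1 + v - v ^ 2 / 2) <= v ^ 3.
Proof.
  intros Hv.
  destruct (MVT_gen (fun z => exp (- z) - 1 + z - z ^ 2 / 2) 0 v
                    (fun z => - (exp (- z) - 1 + z))) as [c [Hc Heq]];
    rewrite ?Rmin_left, ?Rmax_right in * by lra.
  - intros x _. auto_derive; auto. field.
  - intros x _. apply continuity_pt_ex_derive. auto_derive. auto.
  - rewrite Ropp_0, exp_0, Rminus_0_r in Heq.
    pose proof (exp_neg_remainder1 c ltac:(lra)) as Hrem. apply Rabs_le_between in Hrem.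
    assert (c ^ 2 <= v ^ 2) by (simpl; nra).
    apply Rabs_le. replace (v ^ 3) with (v ^ 2 * v) by ring. simpl in Heq. nra.
Qed.

(** * The integrals psi *)

Definition weight (k n : nat) (t : R) := (- sin t) ^ k * cos (2 * INR n * t).

Definition kappa (n : nat) := / (2 * INR n - 1) - / (2 * INR n + 1).

Lemma continuity_pt_weight k n t : continuity_pt (weight k n) t.
Proof. apply continuity_pt_ex_derive. unfold weight. auto_derive. auto. Qed.

Lemma sin_2nPI n : sin (2 * INR n * PI) = 0.
Proof.
  replace (2 * INR n * PI) with (0 + 2 * INR n * PI) by ring.
  rewrite sin_period. apply sin_0.
Qed.

Lemma cos_2nPI_plus_PI n : cos (2 * INR n * PI + PI) = -1.
Proof.
  replace (2 * INR n * PI + PI) with (PI + 2 * INR n * PI) by ring.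
  rewrite cos_period. apply cos_PI.
Qed.

Lemma cos_2nPI_minus_PI n : cos (2 * INR n * PI - PI) = -1.
Proof.
  replace (2 * INR n * PI - PI) with (- PI + 2 * INR n * PI) by ring.
  rewrite cos_period, cos_neg. apply cos_PI.
Qed.

Lemma is_RInt_weight0 n : (1 <= n)%nat -> is_RInt (weight 0 n) 0 PI 0.
Proof.
  intros Hn. assert (1 <= INR n) by (apply (le_INR 1); lia).
  apply (is_RInt_primitive (fun t => sin (2 * INR n * t) / (2 * INR n))).
  - intros t. unfold weight. auto_derive; auto. field. lra.
  - apply continuity_pt_weight.
  - rewrite sin_2nPI, Rmult_0_r, sin_0. field. lra.
Qed.

Lemma is_RInt_weight1 n : (1 <= n)%nat -> is_RInt (weight 1 n) 0 PI (kappa n).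
Proof.
  intros Hn. assert (1 <= INR n) by (apply (le_INR 1); lia).
  apply (is_RInt_primitive (fun t => (cos (2 * INR n * t + t) / (2 * INR n + 1)
                                     - cos (2 * INR n * t - t) / (2 * INR n - 1)) / 2)).
  - intros t. unfold weight. auto_derive; [repeat split; lra|].
    rewrite !sin_plus, sin_neg, cos_neg. field. lra.
  - apply continuity_pt_weight.
  - unfold kappa. rewrite cos_2nPI_plus_PI, cos_2nPI_minus_PI, !Rmult_0_r, Rplus_0_r,
      Rminus_0_r, cos_0. field. lra.
Qed.

Lemma is_RInt_weight2 n : (2 <= n)%nat -> is_RInt (weight 2 n) 0 PI 0.
Proof.
  intros Hn. assert (2 <= INR n) by (apply (le_INR 2); lia).
  apply (is_RInt_primitive (fun t => sin (2 * INR n * t) / (4 * INR n)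
                                     - sin (2 * INR n * t + 2 * t) / (8 * (INR n + 1))
                                     - sin (2 * INR n * t - 2 * t) / (8 * (INR n - 1)))).
  - intros t. unfold weight. auto_derive; [repeat split; lra|].
    rewrite !cos_plus, Ropp_mult_distr_r, cos_neg, sin_neg, cos_2a_sin, sin_2a. field. lra.
  - apply continuity_pt_weight.
  - rewrite !Rmult_0_r, Rplus_0_r, Rminus_0_r, sin_0, sin_2nPI.
    replace (2 * INR n * PI + 2 * PI) with (2 * INR (S n) * PI) by (rewrite S_INR; ring).
    replace (2 * INR n * PI - 2 * PI) with (2 * INR (n - 1) * PI)
      by (rewrite minus_INR by lia; simpl; ring).
    rewrite !sin_2nPI. field. lra.
Qed.

Definition psi (w : R -> R) (u : R) := RInt (fun t => exp (- (u * sin t)) * w t) 0 PI.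

Lemma is_RInt_psi (w : R -> R) u : (forall t, continuity_pt w t) ->
  is_RInt (fun t => exp (- (u * sin t)) * w t) 0 PI (psi w u).
Proof.
  intros Hw. apply (RInt_correct (V := R_CompleteNormedModule)), ex_RInt_continuity_pt.
  intros t. apply continuity_pt_mult; [|apply Hw].
  apply continuity_pt_ex_derive. auto_derive. auto.
Qed.

Lemma is_derive_psi_weight k n u :
  is_derive (psi (weight k n)) u (psi (weight (S k) n) u).
Proof.
  unfold psi.
  replace (RInt (fun t => exp (- (u * sin t)) * weight (S k) n t) 0 PI)
    with (RInt (fun t => exp (- (u * sin t)) * (- sin t * weight k n t)) 0 PI)
    by (apply RInt_ext; intros t _; unfold weight; simpl; ring).
  apply (is_derive_RInt_param_cont (fun z t => exp (- (z * sin t)) * weight k n t)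
           (fun z t => exp (- (z * sin t)) * (- sin t * weight k n t))).
  - pose proof PI_RGT_0. lra.
  - apply filter_forall. intros y t. auto_derive; auto. ring.
  - intros t _. unfold weight. solve_continuity_2d.
  - intros y t. apply continuity_pt_ex_derive. unfold weight. auto_derive. auto.
Qed.

Lemma sin_PI_bounds t : 0 <= t <= PI -> 0 <= sin t <= 1.
Proof. intros Ht. split; [apply sin_ge_0; lra | apply SIN_bound]. Qed.

Lemma Rabs_weight_le k n t : 0 <= t <= PI -> Rabs (weight k n t) <= 1.
Proof.
  intros Ht. destruct (sin_PI_bounds t Ht) as [Hs0 Hs1].
  unfold weight. rewrite Rabs_mult, <- RPow_abs, Rabs_Ropp, (Rabs_pos_eq (sin t)) by lra.
  pose proof (pow_incr _ 1 k (conj Hs0 Hs1)) as Hk. rewrite pow1 in Hk.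
  pose proof (pow_le (sin t) k Hs0).
  assert (Rabs (cos (2 * INR n * t)) <= 1) by (apply Rabs_le, COS_bound).
  pose proof (Rabs_pos (cos (2 * INR n * t))). nra.
Qed.

Lemma Rabs_mult_weight_le k n t x M : 0 <= t <= PI ->
  Rabs x <= M -> Rabs (x * weight k n t) <= M.
Proof.
  intros Ht Hx. pose proof (Rabs_weight_le k n t Ht).
  rewrite Rabs_mult. pose proof (Rabs_pos x). pose proof (Rabs_pos (weight k n t)). nra.
Qed.

Lemma u_sin_bounds u t : 0 <= u -> 0 <= t <= PI -> 0 <= u * sin t <= u.
Proof. intros Hu Ht. pose proof (sin_PI_bounds t Ht). split; nra. Qed.

Lemma Rabs_psi_weight1_le n u : 0 <= u -> Rabs (psi (weight 1 n) u) <= PI.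
Proof.
  intros Hu. replace PI with ((PI - 0) * 1) by ring.
  apply (is_RInt_abs_le _ _ _ _ _ (Rlt_le _ _ PI_RGT_0)
           (is_RInt_psi _ u (continuity_pt_weight 1 n))).
  intros t Ht. apply Rabs_mult_weight_le; [exact Ht|].
  rewrite Rabs_pos_eq by (left; apply exp_pos).
  apply exp_neg_le_1, (u_sin_bounds u t Hu Ht).
Qed.

Lemma Rabs_psi_weight0_le n u : (1 <= n)%nat -> 0 <= u -> Rabs (psi (weight 0 n) u) <= PI * u.
Proof.
  intros Hn Hu.
  assert (Hi : is_RInt (fun t => (exp (- (u * sin t)) - 1) * weight 0 n t) 0 PI
                 (psi (weight 0 n) u - 0)).
  { apply (is_RInt_ext (fun t => exp (- (u * sin t)) * weight 0 n t - weight 0 n t));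
      [intros t _; simpl; ring|].
    apply is_RInt_minus_R; [apply is_RInt_psi, continuity_pt_weight | apply is_RInt_weight0, Hn]. }
  rewrite Rminus_0_r in Hi. replace (PI * u) with ((PI - 0) * u) by ring.
  apply (is_RInt_abs_le _ _ _ _ _ (Rlt_le _ _ PI_RGT_0) Hi).
  intros t Ht. apply Rabs_mult_weight_le; [exact Ht|].
  destruct (u_sin_bounds u t Hu Ht). pose proof (exp_neg_remainder0 (u * sin t)). lra.
Qed.

Lemma Rabs_psi_weight1_taylor n u : (2 <= n)%nat -> 0 <= u ->
  Rabs (kappa n - psi (weight 1 n) u) <= PI * u ^ 2.
Proof.
  intros Hn Hu.
  assert (Hi : is_RInt (fun t => - (exp (- (u * sin t)) - 1 + u * sin t) * weight 1 n t) 0 PI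
                 (kappa n - psi (weight 1 n) u + u * 0)).
  { apply (is_RInt_ext (fun t => weight 1 n t - exp (- (u * sin t)) * weight 1 n t
                                 + u * weight 2 n t));
      [intros t _; unfold weight; simpl; ring|].
    apply is_RInt_plus_R; [apply is_RInt_minus_R|apply is_RInt_scal_R].
    - apply is_RInt_weight1. lia.
    - apply is_RInt_psi, continuity_pt_weight.
    - apply is_RInt_weight2, Hn. }
  rewrite Rmult_0_r, Rplus_0_r in Hi. replace (PI * u ^ 2) with ((PI - 0) * u ^ 2) by ring.
  apply (is_RInt_abs_le _ _ _ _ _ (Rlt_le _ _ PI_RGT_0) Hi).
  intros t Ht. apply Rabs_mult_weight_le; [exact Ht|].
  destruct (u_sin_bounds u t Hu Ht). rewrite Rabs_Ropp.
  eapply Rle_trans; [apply exp_neg_remainder1; lra|]. apply pow_incr. lra.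
Qed.

Lemma Rabs_psi_weight0_taylor n u : (2 <= n)%nat -> 0 <= u ->
  Rabs (u * kappa n - psi (weight 0 n) u) <= PI * u ^ 3.
Proof.
  intros Hn Hu.
  assert (Hi : is_RInt (fun t => - (exp (- (u * sin t)) - 1 + u * sin t - (u * sin t) ^ 2 / 2)
                                 * weight 0 n t) 0 PI
                 (0 - psi (weight 0 n) u + u * kappa n + u ^ 2 / 2 * 0)).
  { apply (is_RInt_ext (fun t => weight 0 n t - exp (- (u * sin t)) * weight 0 n t
                                 + u * weight 1 n t + u ^ 2 / 2 * weight 2 n t));
      [intros t _; unfold weight; simpl; field|].
    apply is_RInt_plus_R; [apply is_RInt_plus_R; [apply is_RInt_minus_R|]|].
    - apply is_RInt_weight0. lia.
    - apply is_RInt_psi, continuity_pt_weight.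
    - apply is_RInt_scal_R, is_RInt_weight1. lia.
    - apply is_RInt_scal_R, is_RInt_weight2, Hn. }
  replace (0 - psi (weight 0 n) u + u * kappa n + u ^ 2 / 2 * 0)
    with (u * kappa n - psi (weight 0 n) u) in Hi by ring.
  replace (PI * u ^ 3) with ((PI - 0) * u ^ 3) by ring.
  apply (is_RInt_abs_le _ _ _ _ _ (Rlt_le _ _ PI_RGT_0) Hi).
  intros t Ht. apply Rabs_mult_weight_le; [exact Ht|].
  destruct (u_sin_bounds u t Hu Ht). rewrite Rabs_Ropp.
  eapply Rle_trans; [apply exp_neg_remainder2; lra|]. apply pow_incr. lra.
Qed.

(** * Positivity of the second primitive *)

Lemma pow_le_base r k : 0 <= r <= 1 -> (1 <= k)%nat -> 0 <= r ^ k <= r.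
Proof.
  intros Hr Hk. destruct k as [|k]; [lia|]. simpl.
  pose proof (pow_incr r 1 k Hr) as Hk1. rewrite pow1 in Hk1.
  pose proof (pow_le r k (proj1 Hr)). split; nra.
Qed.

Section HalfCircle.

Variables (u : R) (n : nat).
Hypothesis Hu : 0 <= u.
Hypothesis Hn : (1 <= n)%nat.

Let N := (2 * n - 1)%nat.

Let INR_N : INR N = 2 * INR n - 1.
Proof. unfold N. rewrite minus_INR, mult_INR by lia. simpl. ring. Qed.

Let INR_N_ge_1 : 1 <= INR N.
Proof. rewrite INR_N. pose proof (le_INR 1 n Hn). simpl in *. lra. Qed.

Let a r := (r + / r) / 2.
Let c r := (/ r - r) / 2.

(* G r t = Re F(r e^{it}) and K r t = Im F(r e^{it}) / r for the function
   F z = z^{2n} exp (i u (z - 1/z) / 2), holomorphic on C \ {0}; the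
   Cauchy-Riemann equations in polar form give d/dr G = d/dt K = dG. *)
Let G r t := r ^ S N * exp (- (u * a r * sin t)) * cos (2 * INR n * t - u * c r * cos t).
Let K r t := r ^ N * exp (- (u * a r * sin t)) * sin (2 * INR n * t - u * c r * cos t).
Let dG r t := r ^ N * exp (- (u * a r * sin t)) *
  (- (u * a r * cos t) * sin (2 * INR n * t - u * c r * cos t)
   + cos (2 * INR n * t - u * c r * cos t) * (2 * INR n + u * c r * sin t)).

Let is_derive_G_r r t : r <> 0 -> is_derive (fun z => G z t) r (dG r t).
Proof.
  intros Hr. unfold G, dG, a, c. auto_derive; [repeat split; auto|].
  change (match N with 0%nat => 1 | S _ => INR N + 1 end) with (INR (S N)).
  rewrite S_INR, INR_N. unfold Rminus, Rdiv. field. exact Hr.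
Qed.

Let is_derive_K_t r t : is_derive (K r) t (dG r t).
Proof. unfold K, dG. auto_derive; auto. unfold Rminus. ring. Qed.

Let A r := RInt (G r) 0 PI.

Let is_derive_A r : 0 < r -> is_derive A r (2 * r ^ N * sin (u * c r)).
Proof.
  intros Hr.
  replace (2 * r ^ N * sin (u * c r)) with (RInt (dG r) 0 PI).
  - apply (is_derive_RInt_param_cont G dG r 0 PI); [apply Rlt_le, PI_RGT_0| | |].
    + exists (mkposreal (r / 2) ltac:(lra)). intros y Hy t. apply is_derive_G_r.
      apply Rabs_lt_between' in Hy. simpl in Hy. lra.
    + intros t _. unfold dG, a, c. cbv beta. solve_continuity_2d; lra.
    + intros y t. apply continuity_pt_ex_derive. unfold G. auto_derive. auto.
  - apply (is_RInt_unique (V := R_CompleteNormedModule)).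
    apply (is_RInt_primitive (K r) (dG r)).
    + apply is_derive_K_t.
    + intros t. apply continuity_pt_ex_derive. unfold dG. auto_derive. auto.
    + unfold K. rewrite sin_PI, cos_PI, sin_0, cos_0, !Rmult_0_r, Ropp_0, exp_0.
      replace (2 * INR n * PI - u * c r * -1) with (u * c r + 2 * INR n * PI) by ring.
      rewrite sin_period, Rminus_0_l, !Rmult_1_r, sin_neg. ring.
Qed.

Let D r := A r - u * (r ^ N / INR N - r ^ S (S N) / INR (S (S N))).

Let is_derive_D r : 0 < r -> is_derive D r (2 * r ^ N * (sin (u * c r) - u * c r)).
Proof.
  intros Hr. unfold D.
  replace (2 * r ^ N * (sin (u * c r) - u * c r))
    with (2 * r ^ N * sin (u * c r) - u * (r ^ N / r - r ^ S N)).
  - apply (is_derive_minus (K := R_AbsRing) (V := R_NormedModule)); [apply is_derive_A, Hr|].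
    auto_derive; [repeat split; apply not_0_INR; unfold N; lia|].
    change (match N with 0%nat => 1 | S _ => INR N + 1 end) with (INR (S N)).
    assert (Hpow : r ^ N = r * r ^ Nat.pred N).
    { replace N with (S (Nat.pred N)) at 1 by (unfold N; lia). reflexivity. }
    replace (r ^ S N) with (r * (r * r ^ Nat.pred N)) by (rewrite <- Hpow; reflexivity).
    rewrite !S_INR, Hpow. match goal with |- ?x = ?y => change (@eq R x y) end.
    field. repeat split; lra.
  - unfold c. simpl. field. lra.
Qed.

Let D_1_le r : 0 < r <= 1 -> D 1 <= D r.
Proof.
  apply (derive_nonpos_le D (fun r => 2 * r ^ N * (sin (u * c r) - u * c r)) 0 1).
  - intros x Hx. apply is_derive_D. lra.
  - intros x Hx.
    assert (Hc : 0 <= u * c x).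
    { apply Rmult_le_pos; [exact Hu|]. unfold c.
      assert (1 <= / x) by (rewrite <- Rinv_1; apply Rinv_le_contravar; lra). lra. }
    assert (sin (u * c x) <= u * c x).
    { destruct (Req_dec (u * c x) 0) as [->|Hc0]; [rewrite sin_0; lra|].
      left. apply sin_lt_x. lra. }
    pose proof (pow_le x N ltac:(lra)). nra.
Qed.

Let D_le_linear r : 0 < r <= 1 -> D r <= (PI + u) * r.
Proof.
  intros Hr. unfold D.
  assert (HA : Rabs (A r) <= (PI - 0) * r).
  { apply (is_RInt_abs_le (G r)); [apply Rlt_le, PI_RGT_0| |].
    - apply (RInt_correct (V := R_CompleteNormedModule)), ex_RInt_ex_derive.
      intros t. unfold G. auto_derive. auto.
    - intros t Ht. unfold G. rewrite !Rabs_mult, (Rabs_pos_eq (r ^ S N))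
        by (apply pow_le; lra).
      rewrite Rabs_pos_eq by (left; apply exp_pos).
      assert (Hexp : exp (- (u * a r * sin t)) <= 1).
      { apply exp_neg_le_1. destruct (sin_PI_bounds t Ht). unfold a.
        assert (0 < / r) by (apply Rinv_0_lt_compat; lra).
        apply Rmult_le_pos; [apply Rmult_le_pos|]; lra. }
      pose proof (pow_le_base r (S N) ltac:(lra) ltac:(lia)).
      assert (Rabs (cos (2 * INR n * t - u * c r * cos t)) <= 1) by (apply Rabs_le, COS_bound).
      pose proof (exp_pos (- (u * a r * sin t))).
      pose proof (Rabs_pos (cos (2 * INR n * t - u * c r * cos t))).
      rewrite Rmult_assoc. apply Rle_trans with (r ^ S N * 1); [|lra].
      apply Rmult_le_compat_l; [lra|]. nra. }
  assert (HL : forall k, (1 <= k)%nat -> 0 <= r ^ k / INR k <= r).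
  { intros k Hk. pose proof (pow_le_base r k ltac:(lra) Hk).
    assert (1 <= INR k) by (apply (le_INR 1); exact Hk).
    split; [apply Rdiv_le_0_compat; lra|].
    apply Rle_trans with (r ^ k); [|lra]. unfold Rdiv.
    rewrite <- (Rmult_1_r (r ^ k)) at 2. apply Rmult_le_compat_l; [lra|].
    rewrite <- Rinv_1. apply Rinv_le_contravar; lra. }
  pose proof (HL N ltac:(unfold N; lia)). pose proof (HL (S (S N)) ltac:(lia)).
  apply Rabs_le_between in HA. nra.
Qed.

Lemma psi_weight0_le : psi (weight 0 n) u <= u * kappa n.
Proof.
  assert (HD1 : D 1 <= 0).
  { apply (le_0_of_le_linear _ (PI + u)). intros r Hr.
    eapply Rle_trans; [apply D_1_le, Hr | apply D_le_linear, Hr]. }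
  replace (D 1) with (psi (weight 0 n) u - u * kappa n) in HD1; [lra|].
  unfold D, A, G, psi, weight, kappa, a, c.
  rewrite !pow1, Rinv_1, !S_INR, INR_N.
  replace ((1 + 1) / 2) with 1 by field. replace ((1 - 1) / 2) with 0 by field.
  f_equal.
  - apply RInt_ext. intros t _. rewrite !Rmult_1_r, Rmult_0_r, Rmult_0_l, Rminus_0_r. simpl. ring.
  - field. split; lra.
Qed.

End HalfCircle.

(* The constants make kern1 and kern0 the primitives of kern2 vanishing at 0
   (by is_RInt_weight1 and is_RInt_weight0). *)
Definition kern0 n b x := / b ^ 2 * (2 * b * x * kappa n - psi (weight 0 n) (2 * b * x)).
Definition kern1 n b x := 2 / b * (kappa n - psi (weight 1 n) (2 * b * x)).
Definition kern2 n b x := -4 * psi (weight 2 n) (2 * b * x).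

Lemma is_derive_kern0 n b x : b <> 0 -> is_derive (kern0 n b) x (kern1 n b x).
Proof.
  intros Hb. unfold kern0, kern1. auto_derive; [eexists; apply is_derive_psi_weight|].
  rewrite (is_derive_unique (fun y => psi (weight 0 n) y) _ _ (is_derive_psi_weight 0 n _)).
  field. exact Hb.
Qed.

Lemma is_derive_kern1 n b x : b <> 0 -> is_derive (kern1 n b) x (kern2 n b x).
Proof.
  intros Hb. unfold kern1, kern2. auto_derive; [eexists; apply is_derive_psi_weight|].
  rewrite (is_derive_unique (fun y => psi (weight 1 n) y) _ _ (is_derive_psi_weight 1 n _)).
  field. exact Hb.
Qed.

Lemma continuity_pt_kern2 n b x : continuity_pt (kern2 n b) x.
Proof.
  apply continuity_pt_ex_derive. unfold kern2. auto_derive.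
  eexists. apply is_derive_psi_weight.
Qed.

Lemma kern0_ge_0 n b x : (1 <= n)%nat -> 0 < b -> 0 <= x -> 0 <= kern0 n b x.
Proof.
  intros Hn Hb Hx. unfold kern0.
  pose proof (psi_weight0_le (2 * b * x) n ltac:(nra) Hn).
  apply Rmult_le_pos; [apply Rlt_le, Rinv_0_lt_compat, pow_lt; exact Hb | lra].
Qed.

Lemma Rabs_scale_le s y M : 0 <= s -> Rabs y <= M -> Rabs (s * y) <= s * M.
Proof. intros Hs Hy. rewrite Rabs_mult, Rabs_pos_eq by exact Hs. apply Rmult_le_compat_l; lra. Qed.

Lemma Rabs_kern1_le n b x : 0 < b -> 0 <= x ->
  Rabs (kern1 n b x) <= 2 / b * (Rabs (kappa n) + PI).
Proof.
  intros Hb Hx. apply Rabs_scale_le; [apply Rlt_le, Rdiv_lt_0_compat; lra|].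
  pose proof (Rabs_psi_weight1_le n (2 * b * x) ltac:(nra)).
  pose proof (Rabs_triang (kappa n) (- psi (weight 1 n) (2 * b * x))).
  unfold Rminus. rewrite Rabs_Ropp in *. lra.
Qed.

Lemma Rabs_kern0_le n b x : (1 <= n)%nat -> 0 < b -> 0 <= x ->
  Rabs (kern0 n b x) <= 2 / b * (Rabs (kappa n) + PI) * x.
Proof.
  intros Hn Hb Hx.
  replace (2 / b * (Rabs (kappa n) + PI) * x)
    with (/ b ^ 2 * (2 * b * x * Rabs (kappa n) + PI * (2 * b * x))) by (field; lra).
  apply Rabs_scale_le; [apply Rlt_le, Rinv_0_lt_compat, pow_lt; exact Hb|].
  pose proof (Rabs_psi_weight0_le n (2 * b * x) Hn ltac:(nra)).
  pose proof (Rabs_triang (2 * b * x * kappa n) (- psi (weight 0 n) (2 * b * x))).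
  unfold Rminus. rewrite Rabs_Ropp, Rabs_mult, (Rabs_pos_eq (2 * b * x)) in * by nra. lra.
Qed.

Lemma Rabs_kern1_le_sqr n b x : (2 <= n)%nat -> 0 < b -> 0 <= x ->
  Rabs (kern1 n b x) <= 8 * PI * b * x ^ 2.
Proof.
  intros Hn Hb Hx.
  replace (8 * PI * b * x ^ 2) with (2 / b * (PI * (2 * b * x) ^ 2)) by (field; lra).
  apply Rabs_scale_le; [apply Rlt_le, Rdiv_lt_0_compat; lra|].
  apply Rabs_psi_weight1_taylor; [exact Hn | nra].
Qed.

Lemma Rabs_kern0_le_cube n b x : (2 <= n)%nat -> 0 < b -> 0 <= x ->
  Rabs (kern0 n b x) <= 8 * PI * b * x ^ 3.
Proof.
  intros Hn Hb Hx.
  replace (8 * PI * b * x ^ 3) with (/ b ^ 2 * (PI * (2 * b * x) ^ 3)) by (field; lra).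
  apply Rabs_scale_le; [apply Rlt_le, Rinv_0_lt_compat, pow_lt; exact Hb|].
  apply Rabs_psi_weight0_taylor; [exact Hn | nra].
Qed.

(** * Double integration by parts *)

Section SecondIntegrationByParts.

Variables (f h0 h1 h2 : R -> R).
Hypothesis Hf1 : forall x, 0 < x -> ex_derive f x.
Hypothesis Hf2 : forall x, 0 < x -> ex_derive (Derive f) x.
Hypothesis Hf2_cont : forall x, 0 < x -> continuous (Derive_n f 2) x.
Hypothesis Hf_convex : forall x, 0 < x -> 0 <= Derive_n f 2 x.
Hypothesis Hh0 : forall x, is_derive h0 x (h1 x).
Hypothesis Hh1 : forall x, is_derive h1 x (h2 x).
Hypothesis Hh2_cont : forall x, continuity_pt h2 x.
Hypothesis Hh0_ge0 : forall x, 0 <= x -> 0 <= h0 x.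

Definition ibp_boundary x := f x * h1 x - Derive f x * h0 x.

Let continuity_pt_f2_h0 x : 0 < x -> continuity_pt (fun x => Derive_n f 2 x * h0 x) x.
Proof.
  intros Hx. apply continuity_pt_mult.
  - apply continuity_pt_filterlim, Hf2_cont, Hx.
  - apply continuity_pt_ex_derive. eexists. apply Hh0.
Qed.

Let is_derive_ibp_boundary x : 0 < x ->
  is_derive ibp_boundary x (f x * h2 x - Derive_n f 2 x * h0 x).
Proof.
  intros Hx. unfold ibp_boundary. auto_derive.
  - repeat split; [apply Hf1, Hx | eexists; apply Hh1 | apply Hf2, Hx | eexists; apply Hh0].
  - replace (Derive (fun y : R => h0 y) x) with (h1 x)
      by (symmetry; apply is_derive_unique, Hh0).
    replace (Derive (fun y : R => h1 y) x) with (h2 x)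
      by (symmetry; apply is_derive_unique, Hh1).
    change (Derive (fun y : R => f y) x) with (Derive f x).
    change (Derive (fun y : R => Derive f y) x) with (Derive_n f 2 x). ring.
Qed.

Lemma ibp_boundary_le_RInt a c I : 0 < a <= c ->
  is_RInt (fun x => f x * h2 x) a c I -> ibp_boundary c - ibp_boundary a <= I.
Proof.
  intros Hac HI.
  assert (Hparts : is_RInt (fun x => f x * h2 x - Derive_n f 2 x * h0 x) a c
                     (ibp_boundary c - ibp_boundary a)).
  { apply (is_RInt_derive (V := R_CompleteNormedModule));
      intros x Hx; rewrite Rmin_left, Rmax_right in Hx by lra.
    - apply is_derive_ibp_boundary. lra.
    - apply continuity_pt_filterlim, continuity_pt_minus; [|apply continuity_pt_f2_h0; lra].
      apply continuity_pt_mult; [apply continuity_pt_ex_derive, Hf1; lra | apply Hh2_cont]. }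
  assert (Hrest : ex_RInt (fun x => Derive_n f 2 x * h0 x) a c).
  { apply (ex_RInt_continuous (V := R_CompleteNormedModule)).
    intros x Hx. rewrite Rmin_left, Rmax_right in Hx by lra.
    apply continuity_pt_filterlim, continuity_pt_f2_h0. lra. }
  assert (Hrest_ge0 : 0 <= RInt (fun x => Derive_n f 2 x * h0 x) a c).
  { apply RInt_ge_0; [lra | exact Hrest|]. intros x Hx.
    apply Rmult_le_pos; [apply Hf_convex | apply Hh0_ge0]; lra. }
  assert (Hsum : is_RInt (fun x => f x * h2 x) a c
                   ((ibp_boundary c - ibp_boundary a) + RInt (fun x => Derive_n f 2 x * h0 x) a c)).
  { apply (is_RInt_ext (fun x => (f x * h2 x - Derive_n f 2 x * h0 x) + Derive_n f 2 x * h0 x));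
      [intros x _; simpl; ring|].
    apply is_RInt_plus_R; [exact Hparts|].
    apply (RInt_correct (V := R_CompleteNormedModule)), Hrest. }
  pose proof (is_RInt_unique (V := R_CompleteNormedModule) _ _ _ _ HI).
  pose proof (is_RInt_unique (V := R_CompleteNormedModule) _ _ _ _ Hsum).
  simpl in *. lra.
Qed.

End SecondIntegrationByParts.

Lemma filterlim_at_right_0_le_linear (B : R -> R) C d : 0 < d ->
  (forall x, 0 < x < d -> Rabs (B x) <= C * x) -> filterlim B (at_right 0) (locally 0).
Proof.
  intros Hd HB P [e He].
  set (C' := Rabs C + 1). assert (HC' : 0 < C') by (pose proof (Rabs_pos C); unfold C'; lra).
  assert (Hdelta : 0 < Rmin d (e / C'))
    by (apply Rmin_glb_lt; [lra | apply Rdiv_lt_0_compat; [apply cond_pos | lra]]).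
  exists (mkposreal _ Hdelta). intros x Hx Hx0. apply He.
  apply Rabs_lt_between' in Hx. simpl in Hx. rewrite Rplus_0_l in Hx.
  pose proof (Rmin_l d (e / C')). pose proof (Rmin_r d (e / C')).
  specialize (HB x ltac:(lra)).
  assert (C * x <= C' * x) by (pose proof (Rle_abs C); unfold C'; nra).
  assert (C' * x < e) by (replace (pos e) with (C' * (e / C')) by (field; lra); nra).
  apply Rabs_lt_between'. rewrite Rplus_0_l, Rminus_0_l. apply Rabs_le_between in HB. lra.
Qed.

Lemma filterlim_p_infty_le (B g : R -> R) :
  (forall x, 0 < x -> Rabs (B x) <= g x) -> is_lim g p_infty 0 ->
  filterlim B (Rbar_locally p_infty) (locally 0).
Proof.
  intros HB Hg.
  apply (filterlim_le_le (fun x => - g x) B g 0).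
  - exists 0. intros x Hx. apply Rabs_le_between, HB, Hx.
  - pose proof (is_lim_opp g p_infty 0 Hg) as Hopp. simpl in Hopp. rewrite Ropp_0 in Hopp.
    exact Hopp.
  - exact Hg.
Qed.

Lemma is_RInt_gen_ge_0_of_boundary (g B : R -> R) L :
  filterlim B (at_right 0) (locally 0) ->
  filterlim B (Rbar_locally p_infty) (locally 0) ->
  (forall a c I, 0 < a <= c -> is_RInt g a c I -> B c - B a <= I) ->
  is_RInt_gen g (at_right 0) (Rbar_locally p_infty) L -> 0 <= L.
Proof.
  intros HB0 HBinf Hibp HL. apply Rle_plus_epsilon. intros eps Heps.
  assert (He : 0 < eps / 3) by lra. set (e := mkposreal _ He).
  assert (Q0 : at_right 0 (fun a => 0 < a < 1 /\ ball 0 e (B a))).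
  { apply filter_and; [exists (mkposreal 1 Rlt_0_1); intros x Hx Hx0|apply HB0, locally_ball].
    apply Rabs_lt_between' in Hx. simpl in Hx. lra. }
  assert (Q1 : Rbar_locally p_infty (fun c => 1 < c /\ ball 0 e (B c))).
  { apply filter_and; [exists 1; auto | apply HBinf, locally_ball]. }
  assert (Q : filter_prod (at_right 0) (Rbar_locally p_infty)
                (fun ac => (0 < fst ac < 1 /\ ball 0 e (B (fst ac))) /\
                           (1 < snd ac /\ ball 0 e (B (snd ac))))).
  { exists (fun a => 0 < a < 1 /\ ball 0 e (B a)) (fun c => 1 < c /\ ball 0 e (B c));
      [exact Q0 | exact Q1 | intros a c Ha Hc; split; assumption]. }
  assert (PF : ProperFilter (filter_prod (at_right 0) (Rbar_locally p_infty)))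
    by exact (@filter_prod_proper R R _ _ (at_right_proper_filter 0) (Rbar_locally_filter p_infty)).
  pose proof (HL _ (locally_ball L e)) as HLe. unfold filtermapi in HLe.
  destruct (@filter_ex _ _ PF _ (filter_and _ _ HLe Q))
    as [[a c] [[I [HI HIL]] [[Ha HBa] [Hc HBc]]]].
  simpl in *. pose proof (Hibp a c I ltac:(lra) HI).
  apply Rabs_lt_between' in HIL, HBa, HBc. simpl in *. lra.
Qed.

Lemma ibp_boundary_kern_at_0 n b (f : R -> R) d K : (2 <= n)%nat -> 0 < b -> 0 < d ->
  (forall x, 0 < x < d -> x * Rabs (f x) <= K /\ x ^ 2 * Rabs (Derive f x) <= K) ->
  filterlim (ibp_boundary f (kern0 n b) (kern1 n b)) (at_right 0) (locally 0).
Proof.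
  intros Hn Hb Hd HK. apply (filterlim_at_right_0_le_linear _ (16 * PI * b * K) d Hd).
  intros x Hx. destruct (HK x Hx) as [Hf Hf'].
  pose proof (Rabs_kern1_le_sqr n b x Hn Hb ltac:(lra)).
  pose proof (Rabs_kern0_le_cube n b x Hn Hb ltac:(lra)).
  assert (Hc : 0 <= 8 * PI * b * x) by (pose proof PI_RGT_0; apply Rmult_le_pos; [nra | lra]).
  assert (Rabs (f x) * Rabs (kern1 n b x) <= K * (8 * PI * b * x)).
  { apply Rle_trans with (Rabs (f x) * (8 * PI * b * x ^ 2));
      [apply Rmult_le_compat_l; [apply Rabs_pos | lra]|].
    replace (Rabs (f x) * (8 * PI * b * x ^ 2)) with (x * Rabs (f x) * (8 * PI * b * x)) by ring.
    apply Rmult_le_compat_r; lra. }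
  assert (Rabs (Derive f x) * Rabs (kern0 n b x) <= K * (8 * PI * b * x)).
  { apply Rle_trans with (Rabs (Derive f x) * (8 * PI * b * x ^ 3));
      [apply Rmult_le_compat_l; [apply Rabs_pos | lra]|].
    replace (Rabs (Derive f x) * (8 * PI * b * x ^ 3))
      with (x ^ 2 * Rabs (Derive f x) * (8 * PI * b * x)) by ring.
    apply Rmult_le_compat_r; lra. }
  unfold ibp_boundary, Rminus. eapply Rle_trans; [apply Rabs_triang|].
  rewrite Rabs_Ropp, !Rabs_mult. lra.
Qed.

Lemma ibp_boundary_kern_at_infty n b (f : R -> R) : (1 <= n)%nat -> 0 < b ->
  is_lim f p_infty 0 -> is_lim (fun x => x * Derive f x) p_infty 0 ->
  filterlim (ibp_boundary f (kern0 n b) (kern1 n b)) (Rbar_locally p_infty) (locally 0).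
Proof.
  intros Hn Hb Hf Hf'. set (C := 2 / b * (Rabs (kappa n) + PI)).
  apply (filterlim_p_infty_le _ (fun x => C * (Rabs (f x) + Rabs (x * Derive f x)))).
  - intros x Hx.
    pose proof (Rabs_kern1_le n b x Hb ltac:(lra)).
    pose proof (Rabs_kern0_le n b x Hn Hb ltac:(lra)). fold C in H, H0.
    unfold ibp_boundary, Rminus. eapply Rle_trans; [apply Rabs_triang|].
    rewrite Rabs_Ropp, !Rabs_mult, (Rabs_pos_eq x) by lra.
    pose proof (Rabs_pos (f x)). pose proof (Rabs_pos (Derive f x)). nra.
  - replace (Finite 0) with (Rbar_mult C (0 + 0)) by (simpl; f_equal; ring).
    apply is_lim_scal_l, is_lim_plus'.
    + pose proof (is_lim_Rabs _ _ _ Hf) as Habs. simpl in Habs. rewrite Rabs_R0 in Habs.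
      exact Habs.
    + pose proof (is_lim_Rabs _ _ _ Hf') as Habs. simpl in Habs. rewrite Rabs_R0 in Habs.
      exact Habs.
Qed.

Lemma is_RInt_gen_kern2_ge_0 n b (f : R -> R) d K L : (2 <= n)%nat -> 0 < b ->
  (forall x, 0 < x -> ex_derive f x) ->
  (forall x, 0 < x -> ex_derive (Derive f) x) ->
  (forall x, 0 < x -> continuous (Derive_n f 2) x) ->
  (forall x, 0 < x -> 0 <= Derive_n f 2 x) ->
  0 < d -> (forall x, 0 < x < d -> x * Rabs (f x) <= K /\ x ^ 2 * Rabs (Derive f x) <= K) ->
  is_lim f p_infty 0 -> is_lim (fun x => x * Derive f x) p_infty 0 ->
  is_RInt_gen (fun x => f x * kern2 n b x) (at_right 0) (Rbar_locally p_infty) L ->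
  0 <= L.
Proof.
  intros Hn Hb Hf1 Hf2 Hf2c Hconv Hd HK Hlim Hlim'.
  apply (is_RInt_gen_ge_0_of_boundary _ (ibp_boundary f (kern0 n b) (kern1 n b))).
  - exact (ibp_boundary_kern_at_0 n b f d K Hn Hb Hd HK).
  - apply ibp_boundary_kern_at_infty; [lia | exact Hb | exact Hlim | exact Hlim'].
  - intros a c I Hac HI. apply (ibp_boundary_le_RInt f _ _ (kern2 n b)); try assumption.
    + intros x. apply is_derive_kern0. lra.
    + intros x. apply is_derive_kern1. lra.
    + apply continuity_pt_kern2.
    + intros x Hx. apply kern0_ge_0; [lia | exact Hb | exact Hx].
Qed.

Lemma limsup_right0_ge_0 (g : R -> R) : (forall x, 0 < x -> 0 <= g x) ->
  Rbar_le 0 (limsup_right0 g).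
Proof.
  intros Hg. unfold limsup_right0.
  apply Glb_Rbar_correct. intros M [d [Hd HM]].
  apply Rbar_le_trans with (g (d / 2)); [apply Hg; lra|].
  rewrite HM. apply Lub_Rbar_correct. exists (d / 2). split; [lra | reflexivity].
Qed.

Lemma limsup_right0_bounded (g : R -> R) : limsup_right0 g <> p_infty ->
  exists d K, 0 < d /\ forall x, 0 < x < d -> g x <= K.
Proof.
  intros Hfin. unfold limsup_right0 in Hfin.
  set (E := fun M : R => exists d, 0 < d /\
              Finite M = Lub_Rbar (fun y => exists x, 0 < x < d /\ y = g x)) in *.
  destruct (Classical_Prop.classic (exists M, E M)) as [[M [d [Hd HM]]]|HE].
  - exists d, M. split; [exact Hd|]. intros x Hx.
    change (Rbar_le (g x) M). rewrite HM. apply Lub_Rbar_correct. exists x. split; auto.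
  - exfalso. apply Hfin.
    assert (Hlb : is_lb_Rbar E p_infty) by (intros M HM; exfalso; apply HE; exists M; exact HM).
    pose proof (proj2 (Glb_Rbar_correct E) p_infty Hlb) as Hle.
    destruct (Glb_Rbar E); simpl in Hle; tauto.
Qed.

Lemma limsup_right0_plus_bounded (g1 g2 : R -> R) C :
  (forall x, 0 < x -> 0 <= g1 x) -> (forall x, 0 < x -> 0 <= g2 x) ->
  Rbar_le (Rbar_plus (limsup_right0 g1) (limsup_right0 g2)) (Finite C) ->
  exists d K, 0 < d /\ forall x, 0 < x < d -> g1 x <= K /\ g2 x <= K.
Proof.
  intros Hg1 Hg2 HC.
  pose proof (limsup_right0_ge_0 g1 Hg1). pose proof (limsup_right0_ge_0 g2 Hg2).
  destruct (limsup_right0_bounded g1) as [d1 [K1 [Hd1 HK1]]].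
  { intros E. rewrite E in HC. destruct (limsup_right0 g2); simpl in *; auto. }
  destruct (limsup_right0_bounded g2) as [d2 [K2 [Hd2 HK2]]].
  { intros E. rewrite E in HC. destruct (limsup_right0 g1); simpl in *; auto. }
  exists (Rmin d1 d2), (Rmax K1 K2). split; [apply Rmin_glb_lt; assumption|].
  intros x Hx. pose proof (Rmin_l d1 d2). pose proof (Rmin_r d1 d2).
  pose proof (Rmax_l K1 K2). pose proof (Rmax_r K1 K2).
  pose proof (HK1 x ltac:(lra)). pose proof (HK2 x ltac:(lra)). lra.
Qed.

Lemma RInt_reflect_odd (g : R -> R) a b : ex_RInt g a b ->
  (forall t, g (a + b - t) = - g t) -> RInt g a b = 0.
Proof.
  intros Hg Hodd.
  assert (E := RInt_comp_lin g (-1) (a + b) a b).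
  replace (-1 * a + (a + b)) with b in E by ring.
  replace (-1 * b + (a + b)) with a in E by ring.
  specialize (E (ex_RInt_swap _ _ _ Hg)).
  rewrite (RInt_ext _ g) in E.
  2:{ intros t _. replace (-1 * t + (a + b)) with (a + b - t) by ring.
      rewrite Hodd. unfold scal; simpl; unfold mult; simpl. ring. }
  rewrite <- (opp_RInt_swap _ _ _ Hg) in E. unfold opp in E; simpl in E. lra.
Qed.

Lemma phi_real k y : phi k y = (psi (weight 0 k) (2 * y), 0).
Proof.
  unfold phi. apply (is_RInt_unique (V := C_R_CompleteNormedModule)).
  apply (is_RInt_fct_extend_pair (U := R_NormedModule) (V := R_NormedModule)); simpl.
  - apply (is_RInt_ext (fun t => exp (- (2 * y * sin t)) * weight 0 k t)).
    { intros t _. unfold weight. simpl.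
      replace (-2 * y * sin t) with (- (2 * y * sin t)) by ring. ring. }
    apply is_RInt_psi, continuity_pt_weight.
  - set (g := fun t => exp (-2 * y * sin t) * sin (2 * INR k * t)).
    assert (Hg : ex_RInt g 0 PI)
      by (apply ex_RInt_ex_derive; intros t; unfold g; auto_derive; auto).
    apply (is_RInt_ext g); [intros t _; unfold g; simpl; ring|].
    assert (Hodd : RInt g 0 PI = 0).
    { apply (RInt_reflect_odd g 0 PI Hg). intros t. unfold g. rewrite Rplus_0_l, sin_PI_x.
      replace (2 * INR k * (PI - t)) with (- (2 * INR k * t) + 2 * INR k * PI) by ring.
      rewrite sin_period, sin_neg. ring. }
    pose proof (RInt_correct (V := R_CompleteNormedModule) _ _ _ Hg) as HI.
    rewrite Hodd in HI. exact HI.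
Qed.

Lemma is_RInt_gen_fst (g : R -> C) F G {FF : Filter F} {FG : Filter G} l :
  is_RInt_gen (V := C_R_NormedModule) g F G l ->
  is_RInt_gen (V := R_NormedModule) (fun x => fst (g x)) F G (fst l).
Proof.
  intros Hg P [eps HP].
  assert (HP' : locally l (fun z : C => P (fst z))) by (exists eps; intros z [Hz _]; apply HP, Hz).
  specialize (Hg _ HP'). unfold filtermapi in *. eapply filter_imp; [|exact Hg].
  intros ab [y [Hy Py]]. exists (fst y). split; [|exact Py].
  apply (is_RInt_fct_extend_fst (U := R_NormedModule) (V := R_NormedModule)), Hy.
Qed.

Lemma is_RInt_gen_snd (g : R -> C) F G {FF : Filter F} {FG : Filter G} l :
  is_RInt_gen (V := C_R_NormedModule) g F G l ->
  is_RInt_gen (V := R_NormedModule) (fun x => snd (g x)) F G (snd l).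
Proof.
  intros Hg P [eps HP].
  assert (HP' : locally l (fun z : C => P (snd z))) by (exists eps; intros z [_ Hz]; apply HP, Hz).
  specialize (Hg _ HP'). unfold filtermapi in *. eapply filter_imp; [|exact Hg].
  intros ab [y [Hy Py]]. exists (snd y). split; [|exact Py].
  apply (is_RInt_fct_extend_snd (U := R_NormedModule) (V := R_NormedModule)), Hy.
Qed.

Lemma lam_is_fst f b k l : lam_is f b k l ->
  is_RInt_gen (fun x => 2 * f x * psi (weight 0 k) (2 * b * x))
    (at_right 0) (Rbar_locally p_infty) (fst l).
Proof.
  intros Hl. apply is_RInt_gen_fst in Hl; try exact _.
  eapply is_RInt_gen_ext; [|exact Hl]. apply filter_forall. intros ab x _.
  rewrite phi_real, <- Rmult_assoc. simpl. ring.
Qed.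

Lemma lam_is_snd f b k l : lam_is f b k l -> snd l = 0.
Proof.
  intros Hl. apply is_RInt_gen_snd in Hl; try exact _.
  assert (Hzero : is_RInt_gen (V := R_NormedModule) (fun _ => 0)
                    (at_right 0) (Rbar_locally p_infty) (snd l)).
  { eapply is_RInt_gen_ext; [|exact Hl]. apply filter_forall. intros ab x _.
    rewrite phi_real. simpl. ring. }
  assert (Hscal : is_RInt_gen (V := R_NormedModule) (fun _ => 0)
                    (at_right 0) (Rbar_locally p_infty) (scal 0 (snd l))).
  { eapply is_RInt_gen_ext; [|exact (is_RInt_gen_scal _ 0 _ Hzero)].
    apply filter_forall. intros ab x _. unfold scal; simpl; unfold mult; simpl. ring. }
  assert (PA : ProperFilter' (at_right 0)) by (apply Proper_StrongProper, at_right_proper_filter).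
  assert (PB : ProperFilter' (Rbar_locally p_infty))
    by (apply Proper_StrongProper, Rbar_locally_filter).
  rewrite <- (is_RInt_gen_unique _ _ Hzero), (is_RInt_gen_unique _ _ Hscal).
  unfold scal; simpl; unfold mult; simpl. ring.
Qed.

Lemma psi_weight0_second_difference n u : (1 <= n)%nat ->
  psi (weight 0 (n + 1)) u + psi (weight 0 (n - 1)) u - 2 * psi (weight 0 n) u
  = -4 * psi (weight 2 n) u.
Proof.
  intros Hn.
  assert (Hsum := is_RInt_minus_R _ _ _ _ _ _
                    (is_RInt_plus_R _ _ _ _ _ _ (is_RInt_psi _ u (continuity_pt_weight 0 (n + 1)))
                                                (is_RInt_psi _ u (continuity_pt_weight 0 (n - 1))))
                    (is_RInt_scal_R _ _ _ 2 _ (is_RInt_psi _ u (continuity_pt_weight 0 n)))).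
  apply (is_RInt_unique (V := R_CompleteNormedModule)) in Hsum. rewrite <- Hsum.
  apply (is_RInt_unique (V := R_CompleteNormedModule)).
  apply (is_RInt_ext (fun t => -4 * (exp (- (u * sin t)) * weight 2 n t))).
  - intros t _. unfold weight. rewrite plus_INR, minus_INR by exact Hn. simpl INR.
    replace (2 * (INR n + 1) * t) with (2 * INR n * t + 2 * t) by ring.
    replace (2 * (INR n - 1) * t) with (2 * INR n * t - 2 * t) by ring.
    rewrite cos_plus, cos_minus, cos_2a_sin, sin_2a. simpl. ring.
  - apply is_RInt_scal_R, is_RInt_psi, continuity_pt_weight.
Qed.

Lemma lam_second_difference f b n l_prev l_n l_next : (1 <= n)%nat ->
  lam_is f b (n - 1) l_prev -> lam_is f b n l_n -> lam_is f b (n + 1) l_next ->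
  is_RInt_gen (fun x => f x * kern2 n b x) (at_right 0) (Rbar_locally p_infty)
    (/ 2 * (fst l_next + fst l_prev - 2 * fst l_n)).
Proof.
  intros Hn Hprev Hcur Hnext.
  pose proof (is_RInt_gen_scal _ (/ 2) _
                (is_RInt_gen_minus _ _ _ _
                   (is_RInt_gen_plus _ _ _ _ (lam_is_fst _ _ _ _ Hnext) (lam_is_fst _ _ _ _ Hprev))
                   (is_RInt_gen_scal _ 2 _ (lam_is_fst _ _ _ _ Hcur)))) as Hcomb.
  eapply is_RInt_gen_ext; [|exact Hcomb]. apply filter_forall. intros ab x _.
  unfold kern2. rewrite <- psi_weight0_second_difference by exact Hn.
  unfold scal, minus, plus, opp; simpl. unfold mult; simpl. field.
Qed.

Theorem lemma3p8 (b : R) (f : R -> R) (Cst : R) :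
  0 < b ->
  (* f in C^2(]0,+oo[) *)
  (forall x, 0 < x -> ex_derive f x) ->
  (forall x, 0 < x -> ex_derive (Derive f) x) ->
  (forall x, 0 < x -> continuous (Derive_n f 2) x) ->
  (* f >= 0 *)
  (forall x, 0 < x -> 0 <= f x) ->
  0 < Cst ->
  (* (1) *)
  Rbar_le (Rbar_plus (limsup_right0 (fun x => x * Rabs (f x)))
                     (limsup_right0 (fun x => x ^ 2 * Rabs (Derive f x))))
          (Finite Cst) ->
  (* (2) *)
  is_lim f p_infty 0 ->
  is_lim (fun x => x * Derive f x) p_infty 0 ->
  (* (3) *)
  (forall x, 0 < x -> 0 <= Derive_n f 2 x) ->
  forall (n : nat), (2 <= n)%nat ->
  forall l_prev l_n l_next : C,
    lam_is f b (n - 1) l_prev -> lam_is f b n l_n -> lam_is f b (n + 1) l_next ->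
    exists r : R, 0 <= r /\
      Cplus (Cplus l_next l_prev) (Copp (Cmult (RtoC 2) l_n)) = RtoC r.
Proof.
  intros Hb Hf1 Hf2 Hf2c _ _ Hlimsup Hlim Hlim' Hconv n Hn l_prev l_n l_next Hprev Hcur Hnext.
  destruct (limsup_right0_plus_bounded _ _ Cst
              (fun x Hx => Rmult_le_pos _ _ (Rlt_le _ _ Hx) (Rabs_pos _))
              (fun x Hx => Rmult_le_pos _ _ (pow_le _ 2 (Rlt_le _ _ Hx)) (Rabs_pos _)) Hlimsup)
    as [d [K [Hd HK]]].
  pose proof (lam_second_difference f b n l_prev l_n l_next ltac:(lia) Hprev Hcur Hnext) as HL.
  pose proof (is_RInt_gen_kern2_ge_0 n b f d K _ Hn Hb Hf1 Hf2 Hf2c Hconv Hd HK Hlim Hlim' HL).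
  exists (fst l_next + fst l_prev - 2 * fst l_n). split; [lra|].
  rewrite (surjective_pairing l_prev), (surjective_pairing l_n), (surjective_pairing l_next).
  rewrite (lam_is_snd _ _ _ _ Hprev), (lam_is_snd _ _ _ _ Hcur), (lam_is_snd _ _ _ _ Hnext).
  unfold Cplus, Copp, Cmult, RtoC. simpl. f_equal; ring.
Qed.
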